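(* Let $p$ be a prime, $d \geq 1$, $V = \mathbb{F}_p^d$, and let $G \leq \mathrm{GL}(V)$ be an irreducible linear group on $V$. Then $\overrightarrow{\mathrm{diam}}(V, G) \leq d(p-1)$.
   Context: Vectors are row vectors and $G$ acts on $V$ by right multiplication. For a subset $\Delta \subseteq V$ and a positive integer $m$, $m \cdot \Delta$ denotes the $m$-fold sumset $\{\delta_1 + \dots + \delta_m \mid \delta_i \in \Delta\}$. $\overrightarrow{\mathrm{diam}}(V, G)$ denotes the maximum of the directed diameters of the nondiagonal orbital graphs of the affine permutation group $VG = \{ v \mapsto b + vA \mid b \in V, A \in G\}$ on $V$, i.e. of the Cayley digraphs on $V$ with connection set a nonzero $G$-orbit $\mathcal{O}$ (arcs $u \to u + w$, $w \in \mathcal{O}$); equivalently, it is the least positive integer $m$ such that $m \cdot (\mathcal{O} \cup \{0\}) = V$ for every nonzero orbit $\mathcal{O}$ of $G$ on $V$. *)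

From mathcomp Require Import all_boot all_order all_algebra.
Set Implicit Arguments. Unset Strict Implicit. Unset Printing Implicit Defensive.
Import GRing.Theory.
Local Open Scope ring_scope.

(* V = F^d realised as row vectors 'rV[F]_d; matrices act by right multiplication. *)

Definition is_linear_group (F : finFieldType) (d : nat) (G : {set 'M[F]_d}) :=
  [/\ 1%:M \in G,
      forall A, A \in G -> A \in unitmx,
      forall A B, A \in G -> B \in G -> A *m B \in G
    & forall A, A \in G -> invmx A \in G].

Definition G_invariant (F : finFieldType) (d : nat) (G : {set 'M[F]_d}) (U : 'M[F]_d) :=
  forall A, A \in G -> (U *m A <= U)%MS.

Definition irreducible_linear_group (F : finFieldType) (d : nat) (G : {set 'M[F]_d}) :=
  (0 < d)%N /\
  forall U : 'M[F]_d, G_invariant G U -> (U == (0 : 'M[F]_d))%MS \/ (U == 1%:M)%MS.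

Definition orbitG (F : finFieldType) (d : nat) (G : {set 'M[F]_d}) (v : 'rV[F]_d)
  : {set 'rV[F]_d} := [set v *m A | A in G].

Fixpoint sumset (F : finFieldType) (d : nat) (m : nat) (D : {set 'rV[F]_d})
  : {set 'rV[F]_d} :=
  match m with
  | 0 => [set 0]
  | m'.+1 => [set x + y | x in sumset m' D, y in D]
  end.

Definition covers_all_orbits (F : finFieldType) (d : nat) (G : {set 'M[F]_d}) (m : nat) :=
  forall v : 'rV[F]_d, v != 0 ->
    sumset m (orbitG G v :|: [set 0]) = [set: 'rV[F]_d].

(* diam->(V,G) <= k : the least positive m covering all nonzero orbits
   exists and is at most k. *)
Definition dirdiam_le (F : finFieldType) (d : nat) (G : {set 'M[F]_d}) (k : nat) :=
  exists m : nat, [/\ (0 < m)%N, (m <= k)%N & covers_all_orbits G m].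

From mathcomp Require Import all_boot all_order all_algebra zify.
Set Implicit Arguments. Unset Strict Implicit. Unset Printing Implicit Defensive.
Import GRing.Theory.
Local Open Scope ring_scope.

(* Let D = O u {0} for a nonzero orbit O.  Irreducibility forces O to span V,
   so V is reached by adjoining orbit vectors o to a subspace U, each raising
   the rank.  A vector of U + <o> is u + k o with u in U and 0 <= k <= p - 1,
   so if m.D contains U then (m + p - 1).D contains U + <o>; after d steps
   d(p - 1).D = V. *)

Section Sumset.
Variables (F : finFieldType) (d : nat).
Implicit Types (D : {set 'rV[F]_d}) (x y o : 'rV[F]_d).

Lemma mem_sumsetS m D x y : x \in sumset m D -> y \in D -> x + y \in sumset m.+1 D.
Proof. by move=> Dx Dy; apply/imset2P; exists x y. Qed.

Lemma sumset_subnDr m n D : 0 \in D -> sumset m D \subset sumset (m + n) D.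
Proof.
move=> D0; apply/subsetP => x mDx; elim: n => [|n IHn]; first by rewrite addn0.
by rewrite addnS -[x]addr0; apply: mem_sumsetS.
Qed.

Lemma mem_sumsetDMn m n k D x o : 0 \in D -> o \in D ->
  (k <= n)%N -> x \in sumset m D -> x + o *+ k \in sumset (m + n) D.
Proof.
move=> D0 Do; elim: k n => [|k IHk] n le_kn mDx.
  by rewrite mulr0n addr0 (subsetP (sumset_subnDr m n D0)).
case: n le_kn => // n le_kn; rewrite addnS mulrS (addrC o) addrA.
exact/mem_sumsetS/Do/IHk.
Qed.

End Sumset.

Lemma Fp_natr_val p (c : 'F_p) : c = (val c)%:R.
Proof. by rewrite natr_Zp. Qed.

Lemma Fp_val_leq p (c : 'F_p) : prime p -> (val c <= p.-1)%N.
Proof.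
by move=> p_pr; rewrite -ltnS prednK ?prime_gt0 //; case: c => /= k; rewrite Fp_cast.
Qed.

Section SpanningSumset.
Variables (p d : nat) (D : {set 'rV['F_p]_d}).
Hypotheses (p_pr : prime p) (D0 : 0 \in D).
Hypothesis D_span : forall U : 'M['F_p]_d, {subset D <= [pred o | o <= U]%MS} -> (1%:M <= U)%MS.

Lemma sumset_addsmx m (U : 'M['F_p]_d) o : o \in D ->
    (forall w : 'rV_d, (w <= U)%MS -> w \in sumset m D) ->
  forall w : 'rV_d, (w <= U + o)%MS -> w \in sumset (m + p.-1) D.
Proof.
move=> Do mDU _ /sub_addsmxP[[a b] ->] /=.
rewrite [b]mx11_scalar mul_scalar_mx [b 0 0]Fp_natr_val scaler_nat.
by apply: mem_sumsetDMn; rewrite ?Fp_val_leq ?mDU ?submxMl.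
Qed.

Lemma exists_subspace_in_sumset r : exists U : 'M['F_p]_d,
  (minn r d <= \rank U)%N /\
  forall w : 'rV_d, (w <= U)%MS -> w \in sumset (r * p.-1) D.
Proof.
elim: r => [|r [U [rkU mDU]]].
  exists 0; split=> [|w]; first by rewrite min0n.
  by rewrite submx0 => /eqP->; rewrite inE.
have [U1 | U_lt1] := boolP (1%:M <= U)%MS.
  exists U; split; first by rewrite (leq_trans (geq_minr _ _)) // col_leq_rank -sub1mx.
  by move=> w /mDU; rewrite mulSn addnC; apply: (subsetP (sumset_subnDr _ _ D0)).
have [o Do oU] : exists2 o, o \in D & ~~ (o <= U)%MS.
  apply/exists_inP; rewrite -negb_forall_in; apply: contra U_lt1 => /forall_inP.
  exact: D_span.
exists (U + o)%MS; split.
  have ltU : (U < U + o)%MS.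
    by rewrite ltmxE addsmxSl; apply: contra oU; apply: submx_trans (addsmxSr U o).
  have rkU_lt : (\rank U < d)%N by rewrite ltnNge col_leq_rank -sub1mx.
  have := rank_ltmx ltU; lia.
by move=> w; rewrite mulSn addnC; apply: sumset_addsmx.
Qed.

Lemma sumset_spanning_full : sumset (d * p.-1) D = [set: 'rV_d].
Proof.
have [U [rkU mDU]] := exists_subspace_in_sumset d.
apply/setP=> w; rewrite inE; apply/mDU/(submx_trans (submx1 w)).
by rewrite sub1mx -col_leq_rank (leq_trans _ rkU) // minnn.
Qed.

End SpanningSumset.

Section OrbitSpan.
Variables (F : finFieldType) (d : nat) (G : {set 'M[F]_d}).
Hypotheses (G1 : 1%:M \in G) (GM : forall A B, A \in G -> B \in G -> A *m B \in G).
Hypothesis G_irr : irreducible_linear_group G.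

Lemma orbit_span_full (v : 'rV[F]_d) (U : 'M[F]_d) : v != 0 ->
  {subset orbitG G v <= [pred o | o <= U]%MS} -> (1%:M <= U)%MS.
Proof.
move=> v_nz orbitU; pose W := (\sum_(A in G) <<v *m A>>)%MS.
have vW : (v <= W)%MS by apply: (sumsmx_sup 1%:M); rewrite ?mulmx1 ?genmxE.
have W_inv : G_invariant G W.
  move=> B GB; rewrite sumsmxMr; apply/sumsmx_subP => A GA.
  rewrite (eqmxMr B (genmxE _)) -mulmxA.
  by apply: (sumsmx_sup (A *m B)); rewrite ?GM ?genmxE.
have WU : (W <= U)%MS.
  by apply/sumsmx_subP => A GA; rewrite genmxE; apply: orbitU; apply/imsetP; exists A.
have [/andP[W0 _] | /andP[_ W1]] := G_irr.2 W W_inv; last exact: submx_trans W1 WU.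
by move: (submx_trans vW W0); rewrite submx0 (negbTE v_nz).
Qed.

End OrbitSpan.

Theorem corollary2p2 (p d : nat) (G : {set 'M['F_p]_d}) :
  prime p -> (1 <= d)%N ->
  is_linear_group G -> irreducible_linear_group G ->
  dirdiam_le G (d * (p - 1)).
Proof.
move=> p_pr d_gt0 [G1 _ GM _] G_irr.
exists (d * (p - 1))%N; split=> //.
  by rewrite muln_gt0 d_gt0 subn_gt0 prime_gt1.
move=> v v_nz; rewrite subn1; apply: sumset_spanning_full => [//||U DU].
  by rewrite !inE eqxx orbT.
by apply: (orbit_span_full G1 GM G_irr v_nz) => o Oo; apply: DU; rewrite inE Oo.
Qed.
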